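(* Safe squares are closed under finite products and coproducts: if, for $i=1,2$, the commuting squares with $p_i:Z_i\to X_i$, $f_i:X_i\to W_i$, $q_i:Z_i\to Y_i$, $g_i:Y_i\to W_i$ (with $f_i\circ p_i=g_i\circ q_i$) are safe squares, then the square with $p_1\times p_2$, $f_1\times f_2$, $q_1\times q_2$, $g_1\times g_2$ is a safe square, and likewise the square with $p_1+p_2$, $f_1+f_2$, $q_1+q_2$, $g_1+g_2$ is a safe square.
   Context: Nominal sets over a countably infinite set $\mathcal V$ of names; products with coordinatewise action, coproducts as disjoint unions. For an equivariant $f:X\to Y$: $u$ is $f$-safe if $|\mathsf{supp}(u)|=\max\{|\mathsf{supp}(v)|:v\in f^{-1}(f(u))\}$; $\mathsf{bv}_f(u)=\mathsf{supp}(u)\setminus\mathsf{supp}(f(u))$; for finite $S$, $S\#v$ means $S\cap\mathsf{supp}(v)=\emptyset$. A commuting square $p:Z\to X$, $f:X\to W$, $q:Z\to Y$, $g:Y\to W$ ($f\circ p=g\circ q$) is a safe square if for every $f$-safe $u\in X$ and $v\in Y$ with $f(u)=g(v)$ and $\mathsf{bv}_f(u)\#v$ there is a $q$-safe $z\in Z$ with $p(z)=u$ and $q(z)=v$. *)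

(* Nominal sets over the countably infinite set of names V := nat. *)
From Stdlib Require Import Arith Lia List.
Import ListNotations.
Set Implicit Arguments.

Record fperm := FPerm {
  pf : nat -> nat;
  pinv : nat -> nat;
  pK : forall n, pinv (pf n) = n;
  pKV : forall n, pf (pinv n) = n;
  pbound : exists N, forall n, N <= n -> pf n = n }.

Definition fperm_id : fperm.
Proof.
  refine (FPerm (fun n => n) (fun n => n) (fun n => eq_refl) (fun n => eq_refl) _).
  exists 0; auto.
Defined.

Definition fperm_comp (p q : fperm) : fperm.
Proof.
  refine (FPerm (fun n => pf p (pf q n)) (fun n => pinv q (pinv p n)) _ _ _).
  - intro n; rewrite pK, pK; reflexivity.
  - intro n; rewrite pKV, pKV; reflexivity.
  - destruct (pbound p) as [N1 H1]; destruct (pbound q) as [N2 H2].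
    exists (N1 + N2); intros n Hn. rewrite H2 by lia. apply H1; lia.
Defined.

Definition supports {T : Type} (act : fperm -> T -> T) (S : list nat) (x : T) : Prop :=
  forall p : fperm, (forall a, In a S -> pf p a = a) -> act p x = x.

Record nominal := Nominal {
  carrier :> Type;
  act : fperm -> carrier -> carrier;
  act_ext : forall p q x, (forall n, pf p n = pf q n) -> act p x = act q x;
  act_id : forall x, act fperm_id x = x;
  act_comp : forall p q x, act (fperm_comp p q) x = act p (act q x);
  fin_supp : forall x, exists S, supports act S x }.

Arguments act {n} p x : rename.
Arguments fin_supp {n} x : rename.
Arguments act_id {n} x : rename.
Arguments act_comp {n} p q x : rename.
Arguments act_ext {n} p q x _ : rename.

(* a belongs to supp(x), the least finite support of x. *)
Definition in_supp {X : nominal} (x : X) (a : nat) : Prop :=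
  forall S, supports (@act X) S x -> In a S.

Definition supp_card {X : nominal} (x : X) (k : nat) : Prop :=
  exists l : list nat, NoDup l /\ (forall a, In a l <-> in_supp x a) /\ length l = k.

Definition equivariant {X Y : nominal} (f : X -> Y) : Prop :=
  forall p x, f (act p x) = act p (f x).

(* u is f-safe: |supp u| is the maximum of |supp v| over v in the fibre of f(u)
   (u itself lies in that fibre, so this says |supp v| <= |supp u| for all such v). *)
Definition f_safe {X W : nominal} (f : X -> W) (u : X) : Prop :=
  forall v : X, f v = f u ->
  forall m n, supp_card v m -> supp_card u n -> m <= n.

Definition bv_fresh {X W Y : nominal} (f : X -> W) (u : X) (v : Y) : Prop :=
  forall a, in_supp u a -> ~ in_supp (f u) a -> ~ in_supp v a.

Definition safe_square {Z X Y W : nominal}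
  (p : Z -> X) (f : X -> W) (q : Z -> Y) (g : Y -> W) : Prop :=
  equivariant p /\ equivariant f /\ equivariant q /\ equivariant g /\
  (forall z, f (p z) = g (q z)) /\
  (forall (u : X) (v : Y), f_safe f u -> f u = g v -> bv_fresh f u v ->
     exists z : Z, f_safe q z /\ p z = u /\ q z = v).

Definition prod_act (X Y : nominal) (p : fperm) (z : X * Y) : X * Y :=
  (act p (fst z), act p (snd z)).

Definition nprod (X Y : nominal) : nominal.
Proof.
  refine (@Nominal (X * Y)%type (prod_act X Y) _ _ _ _).
  - intros p q [x y] H; unfold prod_act; simpl; f_equal; apply act_ext; auto.
  - intros [x y]; unfold prod_act; simpl; rewrite !act_id; reflexivity.
  - intros p q [x y]; unfold prod_act; simpl; rewrite !act_comp; reflexivity.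
  - intros [x y]. destruct (fin_supp x) as [S1 H1]; destruct (fin_supp y) as [S2 H2].
    exists (S1 ++ S2); intros p Hp; unfold prod_act; simpl; f_equal.
    + apply H1; intros a Ha; apply Hp, in_or_app; auto.
    + apply H2; intros a Ha; apply Hp, in_or_app; auto.
Defined.

Definition sum_act (X Y : nominal) (p : fperm) (z : X + Y) : X + Y :=
  match z with inl x => inl (act p x) | inr y => inr (act p y) end.

Definition nsum (X Y : nominal) : nominal.
Proof.
  refine (@Nominal (X + Y)%type (sum_act X Y) _ _ _ _).
  - intros p q [x|y] H; simpl; f_equal; apply act_ext; auto.
  - intros [x|y]; simpl; rewrite act_id; reflexivity.
  - intros p q [x|y]; simpl; rewrite act_comp; reflexivity.
  - intros [x|y].
    + destruct (fin_supp x) as [S H]; exists S; intros p Hp; simpl; f_equal; auto.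
    + destruct (fin_supp y) as [S H]; exists S; intros p Hp; simpl; f_equal; auto.
Defined.

Definition prod_map {X1 X2 Y1 Y2 : nominal} (f1 : X1 -> Y1) (f2 : X2 -> Y2)
  : nprod X1 X2 -> nprod Y1 Y2 := fun z => (f1 (fst z), f2 (snd z)).

Definition sum_map {X1 X2 Y1 Y2 : nominal} (f1 : X1 -> Y1) (f2 : X2 -> Y2)
  : nsum X1 X2 -> nsum Y1 Y2 :=
  fun z => match z with inl x => inl (f1 x) | inr y => inr (f2 y) end.

(* The coproduct case is immediate: supports, fibres and
   safety are computed inside one summand.

   The product case rests on two facts about a pair (u1, u2) and f1 × f2:
   - (decomposition) if (u1, u2) is safe then each u_i is f_i-safe and its bound
     names bv(u_i) = supp u_i \ supp (f_i u_i) are fresh for the other component.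
     Otherwise a permutation renaming the bound names of u_i to fresh names stays
     in the fibre and strictly enlarges supp u1 ∪ supp u2 (safe_with_context);
   - (composition) if each u_i is f_i-safe, bv(u_i) # f_j u_j and bv(u1), bv(u2) are
     disjoint, then |supp u1 ∪ supp u2| = |supp(f1 u1) ∪ supp(f2 u2)| + |bv u1| +
     |bv u2| is maximal in its fibre (prod_safe_build).
   Given the component witnesses z1, z2 of the two squares, we rename their bound
   names away from the other side (which keeps p_i z_i, q_i z_i and safety) and
   conclude with the composition fact. *)

From Stdlib Require Import Arith Lia List Classical ClassicalEpsilon.

Definition union (A B : nat -> Prop) : nat -> Prop := fun a => A a \/ B a.
Definition diff (A B : nat -> Prop) : nat -> Prop := fun a => A a /\ ~ B a.

Definition covers (l : list nat) (P : nat -> Prop) : Prop := forall a, P a -> In a l.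
Definition finite (P : nat -> Prop) : Prop := exists l, covers l P.

Definition sel (P : nat -> Prop) (l : list nat) : list nat :=
  filter (fun a => if excluded_middle_informative (P a) then true else false)
         (nodup Nat.eq_dec l).
Definition cnt (P : nat -> Prop) (l : list nat) : nat := length (sel P l).

Definition card (P : nat -> Prop) : nat :=
  match excluded_middle_informative (finite P) with
  | left fin => cnt P (proj1_sig (constructive_indefinite_description _ fin))
  | right _ => 0
  end.

Lemma sel_spec P l a : In a (sel P l) <-> In a l /\ P a.
Proof.
  unfold sel. rewrite filter_In, nodup_In.
  destruct (excluded_middle_informative (P a)); intuition congruence.
Qed.

Lemma sel_NoDup P l : NoDup (sel P l).
Proof. apply NoDup_filter, NoDup_nodup. Qed.

Lemma cnt_le (P Q : nat -> Prop) l l' :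
  (forall a, In a l -> P a -> In a l' /\ Q a) -> cnt P l <= cnt Q l'.
Proof.
  intros H. apply NoDup_incl_length; [apply sel_NoDup|].
  intros a Ha. apply sel_spec in Ha. apply sel_spec, H; tauto.
Qed.

Lemma cnt_lt (P Q : nat -> Prop) l l' b :
  (forall a, In a l -> P a -> In a l' /\ Q a) -> In b l' -> Q b -> ~ (In b l /\ P b) ->
  cnt P l < cnt Q l'.
Proof.
  intros H Hb Qb Nb. change (length (b :: sel P l) <= length (sel Q l')).
  apply NoDup_incl_length.
  - constructor; [rewrite sel_spec; auto | apply sel_NoDup].
  - intros a [<-|Ha]; apply sel_spec; [auto|]. apply sel_spec in Ha; apply H; tauto.
Qed.

Lemma cnt_disj (A B : nat -> Prop) l :
  (forall a, A a -> B a -> False) -> cnt (union A B) l = cnt A l + cnt B l.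
Proof.
  intros D. unfold cnt.
  rewrite <- length_app. apply Nat.le_antisymm; apply NoDup_incl_length.
  - apply sel_NoDup.
  - intros a Ha; apply sel_spec in Ha; apply in_or_app.
    destruct Ha as [Hl [HA|HB]]; [left|right]; apply sel_spec; auto.
  - apply NoDup_app; try apply sel_NoDup.
    intros a Ha Hb; apply sel_spec in Ha; apply sel_spec in Hb; apply (D a); tauto.
  - intros a Ha; apply in_app_or in Ha; apply sel_spec.
    destruct Ha as [Ha|Ha]; apply sel_spec in Ha; unfold union; tauto.
Qed.

Lemma card_cnt P l : covers l P -> card P = cnt P l.
Proof.
  intros Hl. unfold card.
  destruct excluded_middle_informative as [fin|nfin]; [|exfalso; apply nfin; now exists l].
  destruct (constructive_indefinite_description _ fin) as [l' Hl']; cbn.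
  apply Nat.le_antisymm; apply cnt_le; intros a _ Pa; split; auto.
Qed.

Lemma finite_sub (P Q : nat -> Prop) : finite Q -> (forall a, P a -> Q a) -> finite P.
Proof. intros [l Hl] H. exists l. intros a Pa; auto. Qed.

Lemma finite_union (A B : nat -> Prop) : finite A -> finite B -> finite (union A B).
Proof.
  intros [l Hl] [l' Hl']. exists (l ++ l').
  intros a [Ha|Ha]; apply in_or_app; auto.
Qed.

Lemma card_le (P Q : nat -> Prop) :
  finite Q -> (forall a, P a -> Q a) -> card P <= card Q.
Proof.
  intros [l Hl] H. rewrite (card_cnt P l), (card_cnt Q l); auto.
  - apply cnt_le; auto.
  - intros a Pa; auto.
Qed.

Lemma card_lt (P Q : nat -> Prop) b :
  finite Q -> (forall a, P a -> Q a) -> Q b -> ~ P b -> card P < card Q.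
Proof.
  intros [l Hl] H Qb Nb. rewrite (card_cnt P l), (card_cnt Q l); auto.
  - apply cnt_lt with b; auto; tauto.
  - intros a Pa; auto.
Qed.

Lemma card_ext (P Q : nat -> Prop) :
  finite P -> (forall a, P a <-> Q a) -> card P = card Q.
Proof.
  intros fin E. assert (finite Q) by (apply (finite_sub Q P); firstorder).
  apply Nat.le_antisymm; apply card_le; firstorder.
Qed.

Lemma card_union_disj (A B : nat -> Prop) :
  finite A -> finite B -> (forall a, A a -> B a -> False) ->
  card (union A B) = card A + card B.
Proof.
  intros finA finB D. destruct (finite_union A B finA finB) as [l Hl].
  rewrite (card_cnt _ l), (card_cnt A l), (card_cnt B l); auto using cnt_disj.
  all: intros a Ha; apply Hl; red; auto.
Qed.

Lemma card_union_diff (A B : nat -> Prop) :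
  finite A -> finite B -> card (union A B) = card A + card (diff B A).
Proof.
  intros finA finB. rewrite <- card_union_disj.
  - apply card_ext; [now apply finite_union|].
    intros a; unfold union, diff; destruct (classic (A a)); tauto.
  - auto.
  - apply (finite_sub _ B); unfold diff; tauto.
  - unfold diff; tauto.
Qed.

Lemma card_union_le (A B : nat -> Prop) :
  finite A -> finite B -> card (union A B) <= card A + card B.
Proof.
  intros finA finB. rewrite card_union_diff by auto.
  assert (card (diff B A) <= card B) by (apply card_le; unfold diff; tauto). lia.
Qed.

Lemma card_union_comm (A B : nat -> Prop) :
  finite A -> finite B -> card (union A B) = card (union B A).
Proof. intros; apply card_ext; [now apply finite_union|]; unfold union; tauto. Qed.

Lemma card_sub_diff (A B : nat -> Prop) :
  finite B -> (forall a, A a -> B a) -> card B = card A + card (diff B A).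
Proof.
  intros finB H. rewrite <- card_union_diff.
  - apply card_ext; auto. unfold union; firstorder.
  - now apply (finite_sub A B).
  - auto.
Qed.

Section Excess.
Variables V1 V2 S1 S2 : nat -> Prop.
Hypotheses (fin1 : finite S1) (fin2 : finite S2).
Hypotheses (sub1 : forall a, V1 a -> S1 a) (sub2 : forall a, V2 a -> S2 a).

Let finV : finite (union V1 V2).
Proof. apply (finite_sub _ (union S1 S2)); [now apply finite_union|firstorder]. Qed.
Let finD : finite (union (diff S1 V1) (diff S2 V2)).
Proof. apply (finite_sub _ (union S1 S2)); [now apply finite_union|firstorder]. Qed.

Lemma card_union_excess_le :
  card (union S1 S2) <= card (union V1 V2) + (card (diff S1 V1) + card (diff S2 V2)).
Proof.
  assert (card (union S1 S2) <=
          card (union (union V1 V2) (union (diff S1 V1) (diff S2 V2)))).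
  { apply card_le; [now apply finite_union|].
    intros a; unfold union, diff; destruct (classic (V1 a)), (classic (V2 a)); tauto. }
  assert (card (union (diff S1 V1) (diff S2 V2)) <= card (diff S1 V1) + card (diff S2 V2))
    by (apply card_union_le; [apply (finite_sub _ S1)|apply (finite_sub _ S2)];
        unfold diff; tauto).
  pose proof (card_union_le _ _ finV finD). lia.
Qed.

Lemma card_union_excess_eq :
  (forall a, diff S1 V1 a -> ~ V2 a) -> (forall a, diff S2 V2 a -> ~ V1 a) ->
  (forall a, diff S1 V1 a -> diff S2 V2 a -> False) ->
  card (union S1 S2) = card (union V1 V2) + (card (diff S1 V1) + card (diff S2 V2)).
Proof.
  intros D1 D2 D12. rewrite <- card_union_disj.
  - rewrite <- card_union_disj; auto.
    + apply card_ext; [now apply finite_union|].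
      intros a; specialize (D1 a); specialize (D2 a); specialize (D12 a).
      pose proof (sub1 a); pose proof (sub2 a).
      unfold union, diff in *; destruct (classic (V1 a)), (classic (V2 a)); tauto.
    + intros a [HV|HV] [HE|HE]; first [exact (D1 a HE HV) | exact (D2 a HE HV)
                                      | unfold diff in HE; tauto].
  - apply (finite_sub _ S1); unfold diff; tauto.
  - apply (finite_sub _ S2); unfold diff; tauto.
  - auto.
Qed.

End Excess.

Lemma fresh_name (l : list nat) : exists b, ~ In b l.
Proof.
  exists (S (list_max l)). intros Hin.
  pose proof (proj1 (list_max_le l (list_max l)) (le_n _)) as Hall.
  rewrite Forall_forall in Hall. specialize (Hall _ Hin). lia.
Qed.

Definition sw (a b n : nat) : nat :=
  if Nat.eq_dec n a then b else if Nat.eq_dec n b then a else n.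

Lemma sw_inv a b n : sw a b (sw a b n) = n.
Proof. unfold sw. repeat destruct Nat.eq_dec; subst; congruence. Qed.

Definition fswap (a b : nat) : fperm.
Proof.
  refine (FPerm (sw a b) (sw a b) (sw_inv a b) (sw_inv a b) _).
  exists (S (a + b)). intros n Hn. unfold sw.
  repeat destruct Nat.eq_dec; lia.
Defined.

Definition finv (p : fperm) : fperm.
Proof.
  refine (FPerm (pinv p) (pf p) (pKV p) (pK p) _).
  destruct (pbound p) as [N HN]. exists N. intros n Hn.
  rewrite <- (HN n Hn) at 1. apply pK.
Defined.

Section NominalSet.
Variable X : nominal.

Lemma act_invK (p : fperm) (x : X) : act (finv p) (act p x) = x.
Proof.
  rewrite <- act_comp. rewrite <- (act_id x) at 2. apply act_ext. intros n; apply pK.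
Qed.

Lemma supports_act (p : fperm) (S : list nat) (x : X) :
  supports (@act X) S x -> supports (@act X) (map (pf p) S) (act p x).
Proof.
  intros HS r Hr.
  assert (Hx : act (fperm_comp (finv p) (fperm_comp r p)) x = x).
  { apply HS. intros a Ha. cbn. rewrite Hr by (apply in_map; auto). apply pK. }
  rewrite <- act_comp. rewrite <- Hx at 2. rewrite <- act_comp.
  apply act_ext. intros n; cbn. now rewrite pKV.
Qed.

Lemma in_supp_act (p : fperm) (x : X) c :
  in_supp (act p x) c <-> in_supp x (pinv p c).
Proof.
  split.
  - intros H S HS. apply (supports_act p), H, in_map_iff in HS.
    destruct HS as [s [<- Hs]]. now rewrite pK.
  - intros H S HS. apply (supports_act (finv p)) in HS. rewrite act_invK in HS.
    apply H, in_map_iff in HS. destruct HS as [s [Hs Hin]]. cbn in Hs.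
    replace c with s; auto. rewrite <- (pKV p s), <- (pKV p c). congruence.
Qed.

Lemma supp_finite (x : X) : finite (in_supp x).
Proof. destruct (fin_supp x) as [S HS]. exists S. intros a H; apply H, HS. Qed.

Lemma not_in_supp (x : X) a : ~ in_supp x a -> exists S, supports (@act X) S x /\ ~ In a S.
Proof.
  intros H. apply not_all_ex_not in H. destruct H as [S HS]. exists S. tauto.
Qed.

Lemma swap_fixes (S : list nat) (x : X) a b :
  supports (@act X) S x -> ~ In a S -> ~ In b S -> act (fswap a b) x = x.
Proof.
  intros HS Ha Hb. apply HS. intros c Hc. cbn. unfold sw.
  repeat destruct Nat.eq_dec; subst; tauto.
Qed.

Lemma supp_card_iff (x : X) m : supp_card x m <-> m = card (in_supp x).
Proof.
  split.
  - intros [l [Hnd [Hl <-]]]. rewrite (card_cnt _ l) by (intros a; apply Hl).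
    apply Nat.le_antisymm; apply NoDup_incl_length; try apply sel_NoDup; auto.
    + intros a Ha. apply sel_spec. split; auto. apply Hl, Ha.
    + intros a Ha. apply sel_spec in Ha. tauto.
  - intros ->. destruct (supp_finite x) as [l Hl].
    exists (sel (in_supp x) l). split; [apply sel_NoDup|split].
    + intros a. rewrite sel_spec. firstorder.
    + symmetry. now apply card_cnt.
Qed.

Lemma card_supp_act (p : fperm) (x : X) : card (in_supp (act p x)) = card (in_supp x).
Proof.
  symmetry. apply supp_card_iff.
  destruct (proj2 (supp_card_iff x _) eq_refl) as [l [Hnd [Hl Hlen]]].
  exists (map (pf p) l). split; [|split].
  - apply NoDup_map_NoDup_ForallPairs; auto.
    intros a b _ _ E. rewrite <- (pK p a), <- (pK p b). congruence.
  - intros a. rewrite in_supp_act, in_map_iff, <- Hl. split.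
    + intros [s [<- Hs]]. now rewrite pK.
    + intros H. exists (pinv p a). now rewrite pKV.
  - now rewrite length_map.
Qed.

End NominalSet.

Lemma equivariant_supp {X Y : nominal} (f : X -> Y) (Hf : equivariant f) x a :
  in_supp (f x) a -> in_supp x a.
Proof.
  intros H S HS. apply H. intros p Hp. rewrite <- Hf. f_equal. apply HS; auto.
Qed.

Lemma f_safe_card {X W : nominal} (f : X -> W) u :
  f_safe f u <-> forall v, f v = f u -> card (in_supp v) <= card (in_supp u).
Proof.
  split.
  - intros H v E. apply (H v E); now apply supp_card_iff.
  - intros H v E m n Hm Hn. apply supp_card_iff in Hm, Hn. subst. auto.
Qed.

Lemma f_safe_act {X W : nominal} (f : X -> W) (r : fperm) u :
  f (act r u) = f u -> f_safe f u -> f_safe f (act r u).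
Proof.
  rewrite !f_safe_card, card_supp_act. intros E H v Ev. apply H. congruence.
Qed.

Lemma pair_supp (X Y : nominal) (x : X) (y : Y) a :
  @in_supp (nprod X Y) (x, y) a <-> union (in_supp x) (in_supp y) a.
Proof.
  split.
  - intros H. apply NNPP. intros Hn. apply not_or_and in Hn. destruct Hn as [H1 H2].
    apply not_in_supp in H1 as [S1 [HS1 N1]]; apply not_in_supp in H2 as [S2 [HS2 N2]].
    assert (Ha : In a (S1 ++ S2)).
    { apply H. intros p Hp. cbn. unfold prod_act; cbn. f_equal.
      - apply HS1; intros; apply Hp, in_or_app; auto.
      - apply HS2; intros; apply Hp, in_or_app; auto. }
    apply in_app_or in Ha; tauto.
  - intros [H|H] S HS; apply H; intros p Hp; specialize (HS p Hp);
      cbn in HS; unfold prod_act in HS; cbn in HS; congruence.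
Qed.

Lemma card_supp_pair (X Y : nominal) (x : X) (y : Y) :
  card (@in_supp (nprod X Y) (x, y)) = card (union (in_supp x) (in_supp y)).
Proof.
  apply card_ext; [|apply pair_supp].
  apply (finite_sub _ (union (in_supp x) (in_supp y))); [|apply pair_supp].
  apply finite_union; apply supp_finite.
Qed.

Lemma inl_supp (X Y : nominal) (x : X) a : @in_supp (nsum X Y) (inl x) a <-> in_supp x a.
Proof.
  split; intros H S HS; apply H; intros p Hp; specialize (HS p Hp); cbn in *; congruence.
Qed.

Lemma inr_supp (X Y : nominal) (y : Y) a : @in_supp (nsum X Y) (inr y) a <-> in_supp y a.
Proof.
  split; intros H S HS; apply H; intros p Hp; specialize (HS p Hp); cbn in *; congruence.
Qed.

Lemma card_supp_inl (X Y : nominal) (x : X) :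
  card (@in_supp (nsum X Y) (inl x)) = card (in_supp x).
Proof.
  apply card_ext; [|apply inl_supp].
  apply (finite_sub _ (in_supp x)); [apply supp_finite|apply inl_supp].
Qed.

Lemma card_supp_inr (X Y : nominal) (y : Y) :
  card (@in_supp (nsum X Y) (inr y)) = card (in_supp y).
Proof.
  apply card_ext; [|apply inr_supp].
  apply (finite_sub _ (in_supp y)); [apply supp_finite|apply inr_supp].
Qed.

Lemma prod_map_equivariant {X1 X2 Y1 Y2 : nominal} (f1 : X1 -> Y1) (f2 : X2 -> Y2) :
  equivariant f1 -> equivariant f2 -> equivariant (prod_map f1 f2).
Proof. intros H1 H2 p [x y]. cbn. unfold prod_map, prod_act; cbn. now rewrite H1, H2. Qed.

Lemma sum_map_equivariant {X1 X2 Y1 Y2 : nominal} (f1 : X1 -> Y1) (f2 : X2 -> Y2) :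
  equivariant f1 -> equivariant f2 -> equivariant (sum_map f1 f2).
Proof. intros H1 H2 p [x|y]; cbn; f_equal; auto. Qed.

Lemma pairing_equivariant {Z X Y : nominal} (p : Z -> X) (q : Z -> Y) :
  equivariant p -> equivariant q -> @equivariant Z (nprod X Y) (fun z => (p z, q z)).
Proof. intros Hp Hq r z. cbn. unfold prod_act; cbn. now rewrite Hp, Hq. Qed.

Section Renaming.
Variables X Y : nominal.
Variable h : X -> Y.
Hypothesis h_equivariant : equivariant h.

Lemma rename_bound_name (L : list nat) (x : X) k :
  ~ in_supp (h x) k ->
  exists r, h (act r x) = h x /\
    forall c, in_supp (act r x) c -> c <> k /\ (In c L -> in_supp x c).
Proof.
  intros Nk. destruct (not_in_supp _ _ _ Nk) as [T [HT kT]].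
  destruct (fin_supp x) as [Sx HSx].
  destruct (fresh_name (k :: L ++ T ++ Sx)) as [b Hb].
  cbn [In] in Hb. rewrite !in_app_iff in Hb.
  exists (fswap k b). split.
  - rewrite h_equivariant. apply (swap_fixes _ T); tauto.
  - intros c Hc. apply in_supp_act in Hc. cbn in Hc. unfold sw in Hc.
    destruct (Nat.eq_dec c k) as [->|ck].
    + exfalso. apply Hb. do 3 right. now apply Hc.
    + destruct (Nat.eq_dec c b) as [->|cb]; split; tauto.
Qed.

Lemma rename_away (L : list nat) (x : X) :
  exists r, h (act r x) = h x /\
    forall c, in_supp (act r x) c -> In c L -> in_supp (h x) c.
Proof.
  induction L as [|k L IH].
  - exists fperm_id. rewrite act_id. split; [reflexivity|]. intros c _ [].
  - destruct IH as [r [Er Hr]].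
    destruct (classic (in_supp (h x) k)) as [Hk|Nk].
    + exists r. split; auto. intros c Hc [<-|HL]; auto.
    + rewrite <- Er in Nk.
      destruct (rename_bound_name (k :: L) _ _ Nk) as [s [Es Hs]].
      exists (fperm_comp s r). rewrite act_comp, Es, Er. split; auto.
      intros c Hc HL. destruct (Hs c Hc) as [ck Hc']. apply Hr; auto.
      destruct HL; [congruence|auto].
Qed.

End Renaming.

Lemma safe_witness_rename {Z X Y : nominal} (p : Z -> X) (q : Z -> Y)
  (Ep : equivariant p) (Eq : equivariant q) (B : nat -> Prop) (z : Z) :
  finite B -> f_safe q z ->
  exists z', f_safe q z' /\ p z' = p z /\ q z' = q z /\
    forall c, in_supp z' c -> B c -> union (in_supp (p z)) (in_supp (q z)) c.
Proof.
  intros [L HL] Sz.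
  destruct (rename_away _ _ _ (pairing_equivariant p q Ep Eq) L z) as [r [Er Hr]].
  injection Er as Epr Eqr.
  exists (act r z). repeat split; auto using f_safe_act.
  intros c Hc Bc. apply pair_supp, Hr; auto.
Qed.

(* If u is maximal in its f-fibre for the size of supp(v) ∪ B, then u is f-safe and
   its bound names avoid B: otherwise renaming them away from B would enlarge the
   union. *)
Lemma safe_with_context {X W : nominal} (f : X -> W) (Hf : equivariant f)
  (u : X) (B : nat -> Prop) (finB : finite B) :
  (forall v, f v = f u -> card (union (in_supp v) B) <= card (union (in_supp u) B)) ->
  f_safe f u /\ (forall a, in_supp u a -> ~ in_supp (f u) a -> ~ B a).
Proof.
  intros Hmax.
  assert (finD : forall A, finite (diff B A))
    by (intros A; apply (finite_sub _ B); unfold diff; tauto).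
  assert (less_bound : card (diff B (in_supp u)) <= card (diff B (in_supp (f u)))).
  { apply card_le; auto. intros a [Ba Na]. split; auto.
    intros H; apply Na; eapply equivariant_supp; eauto. }
  assert (Key : forall v, f v = f u ->
    card (in_supp v) + card (diff B (in_supp (f u))) <=
    card (in_supp u) + card (diff B (in_supp u))).
  { intros v Ev. pose proof finB as [L HL].
    destruct (rename_away _ _ f Hf L v) as [r [Er Hr]].
    specialize (Hmax (act r v) (eq_trans Er Ev)).
    rewrite !card_union_diff, card_supp_act in Hmax by auto using supp_finite.
    assert (card (diff B (in_supp (f u))) <= card (diff B (in_supp (act r v)))).
    { apply card_le; auto. intros a [Ba Na]. split; auto.
      intros H. apply Na. rewrite <- Ev. apply Hr; auto. }
    lia. }
  split.
  - apply f_safe_card. intros v Ev. specialize (Key v Ev). lia.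
  - intros a Ha Na Ba. specialize (Key u eq_refl).
    assert (card (diff B (in_supp u)) < card (diff B (in_supp (f u)))).
    { apply (card_lt _ _ a); auto.
      - intros c [Bc Nc]. split; auto. intros H; apply Nc; eapply equivariant_supp; eauto.
      - split; auto.
      - unfold diff; tauto. }
    lia.
Qed.

Lemma bv_fresh_pair {X W V1 V2 : nominal} (f : X -> W) (u : X) (v1 : V1) (v2 : V2) :
  @bv_fresh X W (nprod V1 V2) f u (v1, v2) -> bv_fresh f u v1 /\ bv_fresh f u v2.
Proof.
  intros Hb. split; intros a Ha Na Hv; apply (Hb a Ha Na), pair_supp; red; auto.
Qed.

Section ProductSafety.
Variables X1 X2 W1 W2 : nominal.
Variables (f1 : X1 -> W1) (f2 : X2 -> W2).
Hypotheses (Ef1 : equivariant f1) (Ef2 : equivariant f2).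

Lemma prod_safe_left (u1 : X1) (u2 : X2) :
  f_safe (prod_map f1 f2) (u1, u2) -> f_safe f1 u1 /\ bv_fresh f1 u1 u2.
Proof.
  rewrite f_safe_card. intros Hs.
  apply safe_with_context; auto using supp_finite.
  intros v Ev. rewrite <- (card_supp_pair X1 X2 v u2), <- (card_supp_pair X1 X2 u1 u2).
  apply (Hs (v, u2)).
  unfold prod_map; cbn. now rewrite Ev.
Qed.

Lemma prod_safe_right (u1 : X1) (u2 : X2) :
  f_safe (prod_map f1 f2) (u1, u2) -> f_safe f2 u2 /\ bv_fresh f2 u2 u1.
Proof.
  rewrite f_safe_card. intros Hs.
  apply safe_with_context; auto using supp_finite.
  intros v Ev. rewrite !(card_union_comm _ (in_supp u1)) by apply supp_finite.
  rewrite <- (card_supp_pair X1 X2 u1 v), <- (card_supp_pair X1 X2 u1 u2).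
  apply (Hs (u1, v)). unfold prod_map; cbn. now rewrite Ev.
Qed.

(* When bv(u1) is fresh for u2, the bound names of u1 are bound in (u1, u2). *)
Lemma bv_fresh_prod_left {V : nominal} (u1 : X1) (u2 : X2) (v : V) :
  bv_fresh f1 u1 u2 -> bv_fresh (prod_map f1 f2) (u1, u2) v -> bv_fresh f1 u1 v.
Proof.
  intros D Hb a Ha Na. apply Hb; [apply pair_supp; now left|].
  change (~ @in_supp (nprod W1 W2) (f1 u1, f2 u2) a).
  rewrite pair_supp. intros [H|H]; [auto|].
  exact (D a Ha Na (equivariant_supp f2 Ef2 u2 a H)).
Qed.

Lemma bv_fresh_prod_right {V : nominal} (u1 : X1) (u2 : X2) (v : V) :
  bv_fresh f2 u2 u1 -> bv_fresh (prod_map f1 f2) (u1, u2) v -> bv_fresh f2 u2 v.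
Proof.
  intros D Hb a Ha Na. apply Hb; [apply pair_supp; now right|].
  change (~ @in_supp (nprod W1 W2) (f1 u1, f2 u2) a).
  rewrite pair_supp. intros [H|H]; [|auto].
  exact (D a Ha Na (equivariant_supp f1 Ef1 u1 a H)).
Qed.

(* Conversely, a pair of f_i-safe elements whose bound names are fresh for the
   other image and pairwise disjoint is (f1 × f2)-safe: the union of supports is then
   the disjoint union of supp(f1 u1) ∪ supp(f2 u2) and the two sets of bound names,
   each of which is as large as possible. *)
Lemma prod_safe_build (u1 : X1) (u2 : X2) :
  f_safe f1 u1 -> f_safe f2 u2 ->
  bv_fresh f1 u1 (f2 u2) -> bv_fresh f2 u2 (f1 u1) ->
  (forall c, in_supp u1 c -> ~ in_supp (f1 u1) c ->
             in_supp u2 c -> ~ in_supp (f2 u2) c -> False) ->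
  f_safe (prod_map f1 f2) (u1, u2).
Proof.
  rewrite !f_safe_card. intros S1 S2 D1 D2 D12 [w1 w2] Ew.
  injection Ew as Ew1 Ew2. rewrite !card_supp_pair.
  assert (sub1 : forall a, in_supp (f1 u1) a -> in_supp w1 a)
    by (intros a; rewrite <- Ew1; apply equivariant_supp, Ef1).
  assert (sub2 : forall a, in_supp (f2 u2) a -> in_supp w2 a)
    by (intros a; rewrite <- Ew2; apply equivariant_supp, Ef2).
  pose proof (card_union_excess_le _ _ _ _ (supp_finite _ w1) (supp_finite _ w2) sub1 sub2).
  assert (Eu : card (union (in_supp u1) (in_supp u2)) =
    card (union (in_supp (f1 u1)) (in_supp (f2 u2))) +
    (card (diff (in_supp u1) (in_supp (f1 u1))) + card (diff (in_supp u2) (in_supp (f2 u2))))).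
  { apply card_union_excess_eq.
    - apply supp_finite.
    - apply supp_finite.
    - exact (equivariant_supp f1 Ef1 u1).
    - exact (equivariant_supp f2 Ef2 u2).
    - intros a [Ha Na]; exact (D1 a Ha Na).
    - intros a [Ha Na]; exact (D2 a Ha Na).
    - intros a [Ha Na] [Hb Nb]; exact (D12 a Ha Na Hb Nb). }
  assert (E1 := card_sub_diff _ _ (supp_finite _ w1) sub1).
  assert (E2 := card_sub_diff _ _ (supp_finite _ w2) sub2).
  assert (E1' := card_sub_diff _ _ (supp_finite _ u1) (equivariant_supp f1 Ef1 u1)).
  assert (E2' := card_sub_diff _ _ (supp_finite _ u2) (equivariant_supp f2 Ef2 u2)).
  specialize (S1 w1 Ew1). specialize (S2 w2 Ew2). lia.
Qed.

End ProductSafety.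

Lemma sum_safe_inl {X1 X2 W1 W2 : nominal} (f1 : X1 -> W1) (f2 : X2 -> W2) u :
  f_safe (sum_map f1 f2) (inl u) <-> f_safe f1 u.
Proof.
  rewrite !f_safe_card. split.
  - intros H v E. rewrite <- !(card_supp_inl X1 X2). apply H. cbn. congruence.
  - intros H [v|v] E; cbn in E; [|discriminate]. injection E as E.
    rewrite !card_supp_inl. auto.
Qed.

Lemma sum_safe_inr {X1 X2 W1 W2 : nominal} (f1 : X1 -> W1) (f2 : X2 -> W2) u :
  f_safe (sum_map f1 f2) (inr u) <-> f_safe f2 u.
Proof.
  rewrite !f_safe_card. split.
  - intros H v E. rewrite <- !(card_supp_inr X1 X2). apply H. cbn. congruence.
  - intros H [v|v] E; cbn in E; [discriminate|]. injection E as E.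
    rewrite !card_supp_inr. auto.
Qed.

Section SafeSquares.
Variables Z1 X1 Y1 W1 Z2 X2 Y2 W2 : nominal.
Variables (p1 : Z1 -> X1) (f1 : X1 -> W1) (q1 : Z1 -> Y1) (g1 : Y1 -> W1).
Variables (p2 : Z2 -> X2) (f2 : X2 -> W2) (q2 : Z2 -> Y2) (g2 : Y2 -> W2).
Hypotheses (H1 : safe_square p1 f1 q1 g1) (H2 : safe_square p2 f2 q2 g2).

Lemma sum_safe_square :
  safe_square (sum_map p1 p2) (sum_map f1 f2) (sum_map q1 q2) (sum_map g1 g2).
Proof.
  destruct H1 as [Ep1 [Ef1 [Eq1 [Eg1 [C1 S1]]]]].
  destruct H2 as [Ep2 [Ef2 [Eq2 [Eg2 [C2 S2]]]]].
  repeat split; auto using sum_map_equivariant.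
  - intros [z|z]; cbn; f_equal; auto.
  - intros [u|u] [v|v] Hs E Hb; cbn in E; try discriminate; injection E as E.
    + apply sum_safe_inl in Hs.
      destruct (S1 u v Hs E) as [z [Hz [Pz Qz]]].
      { intros a Ha Na Hv. apply (Hb a).
        - now apply inl_supp.
        - cbn. now rewrite inl_supp.
        - now apply inl_supp. }
      exists (inl z). rewrite sum_safe_inl. cbn. now rewrite Pz, Qz.
    + apply sum_safe_inr in Hs.
      destruct (S2 u v Hs E) as [z [Hz [Pz Qz]]].
      { intros a Ha Na Hv. apply (Hb a).
        - now apply inr_supp.
        - cbn. now rewrite inr_supp.
        - now apply inr_supp. }
      exists (inr z). rewrite sum_safe_inr. cbn. now rewrite Pz, Qz.
Qed.

Lemma prod_safe_square :
  safe_square (prod_map p1 p2) (prod_map f1 f2) (prod_map q1 q2) (prod_map g1 g2).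
Proof.
  destruct H1 as [Ep1 [Ef1 [Eq1 [Eg1 [C1 S1]]]]].
  destruct H2 as [Ep2 [Ef2 [Eq2 [Eg2 [C2 S2]]]]].
  repeat split; auto using prod_map_equivariant.
  - intros [z1 z2]. unfold prod_map; cbn. now rewrite C1, C2.
  - intros [u1 u2] [v1 v2] Hs E Hb. injection E as E1 E2.
    destruct (prod_safe_left _ _ _ _ f1 f2 Ef1 u1 u2 Hs) as [Su1 Du1].
    destruct (prod_safe_right _ _ _ _ f1 f2 Ef2 u1 u2 Hs) as [Su2 Du2].
    destruct (bv_fresh_pair f1 u1 v1 v2 (bv_fresh_prod_left _ _ _ _ f1 f2 Ef2 _ _ _ Du1 Hb))
      as [Bu1v1 Bu1v2].
    destruct (bv_fresh_pair f2 u2 v1 v2 (bv_fresh_prod_right _ _ _ _ f1 f2 Ef1 _ _ _ Du2 Hb))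
      as [Bu2v1 Bu2v2].
    assert (F1 : forall a, in_supp (f1 u1) a -> in_supp v1 a)
      by (intros a; rewrite E1; apply equivariant_supp, Eg1).
    assert (F2 : forall a, in_supp (f2 u2) a -> in_supp v2 a)
      by (intros a; rewrite E2; apply equivariant_supp, Eg2).
    destruct (S1 u1 v1 Su1 E1 Bu1v1) as [z1 [Sz1 [<- <-]]].
    destruct (S2 u2 v2 Su2 E2 Bu2v2) as [z2 [Sz2 [<- <-]]].
    destruct (safe_witness_rename p1 q1 Ep1 Eq1 (union (in_supp (p2 z2)) (in_supp (q2 z2)))
                z1 (finite_union _ _ (supp_finite _ _) (supp_finite _ _)) Sz1)
      as [z1' [Sz1' [P1 [Q1 R1]]]].
    destruct (safe_witness_rename p2 q2 Ep2 Eq2 (union (in_supp z1') (in_supp (q1 z1)))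
                z2 (finite_union _ _ (supp_finite _ _) (supp_finite _ _)) Sz2)
      as [z2' [Sz2' [P2 [Q2 R2]]]].
    exists (z1', z2'). split; [|unfold prod_map; cbn; now rewrite P1, Q1, P2, Q2].
    apply prod_safe_build; auto; unfold bv_fresh; rewrite ?Q1, ?Q2.
    + intros c Hc Nc Hv2.
      destruct (R1 c Hc (or_intror Hv2)) as [Hu1|Hv1]; [|contradiction].
      exact (Bu1v2 c Hu1 (fun H => Nc (F1 c H)) Hv2).
    + intros c Hc Nc Hv1.
      destruct (R2 c Hc (or_intror Hv1)) as [Hu2|Hv2]; [|contradiction].
      exact (Bu2v1 c Hu2 (fun H => Nc (F2 c H)) Hv1).
    + intros c Hc1 Nc1 Hc2 Nc2.
      destruct (R2 c Hc2 (or_introl Hc1)) as [Hu2|Hv2]; [|contradiction].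
      destruct (R1 c Hc1 (or_introl Hu2)) as [Hu1|Hv1]; [|contradiction].
      exact (Du1 c Hu1 (fun H => Nc1 (F1 c H)) Hu2).
Qed.

End SafeSquares.

Theorem lemma5p37
  (Z1 X1 Y1 W1 Z2 X2 Y2 W2 : nominal)
  (p1 : Z1 -> X1) (f1 : X1 -> W1) (q1 : Z1 -> Y1) (g1 : Y1 -> W1)
  (p2 : Z2 -> X2) (f2 : X2 -> W2) (q2 : Z2 -> Y2) (g2 : Y2 -> W2)
  (H1 : safe_square p1 f1 q1 g1) (H2 : safe_square p2 f2 q2 g2) :
  safe_square (prod_map p1 p2) (prod_map f1 f2) (prod_map q1 q2) (prod_map g1 g2) /\
  safe_square (sum_map p1 p2) (sum_map f1 f2) (sum_map q1 q2) (sum_map g1 g2).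
Proof.
  split; [apply prod_safe_square | apply sum_safe_square]; assumption.
Qed.
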